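(* (Refinement Validity.) Consider an execution of the Aegean protocol described in the context, under the stated failure model, network model and Reasoning Refinement assumption. If the protocol outputs a solution $s$, then $s$ satisfies refinement validity: $Q(t,s)\ge Q(t,s^* )$ for some majority optimal solution $s^*$.
   Context: Setting. A single task description $t$ (a string) is given to all agents. A Quality Oracle is a deterministic function $Q:\Sigma^*\times\Sigma^*\to\mathbb{R}$ that maps a task description and a solution string to a real number, the quality of the solution for the task; it is unknown to the agents. There are $N$ agents $A_0,\dots,A_{N-1}$. Each agent is a state machine with an internal context $c$ and a reasoning function $\mathcal{R}:(c,\text{string})\mapsto(c',\text{string})$; the input string is either the task description or a string combining a list of solutions with their reasoning traces, and the output string contains a solution together with a reasoning trace (context input/output is left implicit, writing $r\gets\mathcal{R}(x)$). Majority optimal solution: supposing each agent individually generates a solution to $t$, a majority optimal solution is a solution of maximal $Q$-quality among the individual solutions generated by some simple majority of the agents. Reasoning Refinement assumption: for any set $S$ of solutions (with reasoning traces) and any agent, if the agent applies its reasoning function to a string $\bar s$ combining all solutions in $S$, then $Q(t,\mathcal{R}(\bar s))\ge Q(t,s)$ for every $s\in S$. Failure/network model: agents fail only by stopping (fail-stop; a failed agent stops responding but never deviates from the protocol); at most $\lceil (N-1)/2\rceil$ agents fail; a quorum is any set of a majority of the agents, so any two quorums intersect. Agents are fully connected and the network is partially synchronous: after some finite but unknown time, every message is delivered within a bounded delay. The Aegean protocol. Execution proceeds in terms, numbered increasingly; each agent keeps a term number, a role (leader, candidate or worker), an id, a round number, and a stored refinement set refmset. Leader election: an agent entering a new term broadcasts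 RequestVote(term) and becomes candidate; an agent receiving a RequestVote with a higher term adopts that term, becomes worker and replies Vote; each agent casts at most one vote per term (a candidate votes for itself); a candidate receiving votes from a quorum of distinct agents for its term becomes leader; on lack of progress agents time out, advance the term and retry. Hence there is at most one leader per term. First term: the leader broadcasts Task(term, $t$); each agent computes $s\gets\mathcal{R}(t)$ and sends Solution(term, id, $s$) to the leader; the leader collects Solution messages from a quorum of distinct agents (including itself), lets $\bar R$ be the set of these solutions, sets round to $1$ and broadcasts RefmSet(term, round, $\bar R$). Refinement rounds: an agent receiving a RefmSet with round number no less than its own stores $\bar R$ as its refmset, updates its round number, computes $r\gets\mathcal{R}(\bar R)$ and sends Refm(term, id, round, $r$) to the leader; the leader collects Refm messages with matching round from a quorum of distinct agents, lets $\bar R$ be the set of these refined solutions (the refinement set of that round), inputs (term, round, $\bar R$) to the refinement decision engine, increments its round number and broadcasts RefmSet(term, round, $\bar R$); this repeats until a solution is output. Leader change: a newly elected leader broadcasts NewTerm(term); an agent receiving NewTerm with a term greater than its own replies NewTermAck(new term, its current term, id, its round, its refmset) and adopts the new term; upon NewTermAcks with matching new term from a quorum, the new leader selects the ack with the highest (old) term, breaking ties by highest round, sets its round to $1$ and broadcasts RefmSet(term, 1, $\bar R$) with $\bar R$ taken from the selected ack; then normal refinement rounds proceed. Refinement decision engine: only the leader outputs solutions; in a term, a solution output ''in round $i$'' must belong to the refinement set of round $i$, may only be output once the leader has collected the refinement set of round $i+1$, and at most one solution is output per round. Users may impose additional output criteria (e.g. requiring at least $\alpha$ semantically equivalent solutions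 in a refinement set, or that a solution appear in $\beta$ consecutive rounds' refinement sets). *)

From mathcomp Require Import all_boot.
From Stdlib Require Import Reals.

Set Implicit Arguments.
Unset Strict Implicit.
Unset Printing Implicit Defensive.

(*   enc     : the (fixed) way a list of solutions with their reasoning traces *)
(*             is combined into one input string for the reasoning function    *)
(*   crit    : additional user output criterion of the decision engine,        *)
(*             crit term round history s (arbitrary)                           *)
Record Setup := {
  N : nat;
  Sym : Type;
  Ctx : Type;
  task : seq Sym;
  enc : seq (seq Sym) -> seq Sym;
  reason : 'I_N -> Ctx -> seq Sym -> Ctx * seq Sym;
  ctx0 : 'I_N -> Ctx;
  crit : nat -> nat -> seq (nat * seq (seq Sym)) -> seq Sym -> Prop
}.

Definition Str (S : Setup) := seq (Sym S).
Definition agent (S : Setup) := 'I_(N S).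

Definition quorum (S : Setup) (l : seq (agent S)) : bool :=
  (N S < 2 * size (undup l))%N.

Inductive payload (S : Setup) :=
| RequestVote (T : nat)
| Vote (T : nat)
| Task (T : nat) (t : Str S)
| Solution (T : nat) (id : agent S) (s : Str S)
| RefmSet (T r : nat) (R : seq (Str S))
| Refm (T : nat) (id : agent S) (r : nat) (x : Str S)
| NewTerm (T : nat)
| NewTermAck (T oldT : nat) (id : agent S) (r : nat) (R : option (seq (Str S))).

Record msg (S : Setup) := Msg { src : agent S; dst : agent S; pay : payload S }.

Inductive role := Leader | Candidate | Worker.

(* leader sub-phase: collecting Solutions, collecting NewTermAcks, refining *)
Inductive lphase := PNone | PSol | PAck | PRefine.

Record ackrec (S : Setup) :=
  Ack { a_old : nat; a_id : agent S; a_round : nat; a_R : option (seq (Str S)) }.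

Record lstate (S : Setup) := LState {
  alive : bool;
  term : nat;
  rol : role;
  round : nat;
  refmset : option (seq (Str S));
  ctx : Ctx S;
  votes : seq (agent S);
  phase : lphase;
  coll : seq (agent S * Str S);       (* Solution / Refm messages collected (leader) *)
  acks : seq (ackrec S);
  hist : seq (nat * seq (Str S));     (* refinement sets collected in this term *)
  outr : seq nat                      (* rounds in which a solution was output *)
}.

Definition enter S (st : lstate S) T r (v : seq (agent S)) : lstate S :=
  LState (alive st) T r 0 (refmset st) (ctx st) v PNone [::] [::] [::] [::].

Definition adopt S (st : lstate S) T := enter st T Worker [::].

Definition with_lead S (st : lstate S) ph rnd (c : seq (agent S * Str S)) a h : lstate S :=
  LState (alive st) (term st) Leader rnd (refmset st) (ctx st) (votes st) ph c a h (outr st).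

Definition with_refm S (st : lstate S) r R c : lstate S :=
  LState (alive st) (term st) (rol st) r (Some R) c (votes st) (phase st) (coll st)
         (acks st) (hist st) (outr st).

Definition with_ctx S (st : lstate S) c : lstate S :=
  LState (alive st) (term st) (rol st) (round st) (refmset st) c (votes st) (phase st)
         (coll st) (acks st) (hist st) (outr st).

Definition with_votes S (st : lstate S) v : lstate S :=
  LState (alive st) (term st) (rol st) (round st) (refmset st) (ctx st) v (phase st)
         (coll st) (acks st) (hist st) (outr st).

Definition with_outr S (st : lstate S) o : lstate S :=
  LState (alive st) (term st) (rol st) (round st) (refmset st) (ctx st) (votes st) (phase st)
         (coll st) (acks st) (hist st) o.

Definition kill S (st : lstate S) : lstate S :=
  LState false (term st) (rol st) (round st) (refmset st) (ctx st) (votes st) (phase st)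
         (coll st) (acks st) (hist st) (outr st).

Definition bcast S (i : agent S) (p : payload S) : seq (msg S) :=
  [seq Msg i j p | j <- enum 'I_(N S)].

Definition lex_le (a b : nat * nat) : bool :=
  (a.1 < b.1)%N || ((a.1 == b.1) && (a.2 <= b.2)%N).

(* [handle i st from p st' out g]: agent i in local state st processes payload p
   sent by [from]; it moves to st', sends the messages out, and g lists the
   individual solutions R(t) it generated (for the task). *)
Inductive handle (S : Setup) (i : agent S) (st : lstate S) (from : agent S) :
  payload S -> lstate S -> seq (msg S) -> seq (agent S * Str S) -> Prop :=
| H_RequestVote T :
    (term st < T)%N ->
    handle i st from (@RequestVote S T) (adopt st T) [:: Msg i from (@Vote S T)] [::]
| H_Vote_wait T :
    rol st = Candidate -> term st = T ->
    ~~ quorum (undup (from :: votes st)) ->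
    handle i st from (@Vote S T) (with_votes st (undup (from :: votes st))) [::] [::]
| H_Vote_elected_first T :
    rol st = Candidate -> term st = T -> T = 1 ->
    quorum (undup (from :: votes st)) ->
    handle i st from (@Vote S T)
      (with_lead (with_votes st (undup (from :: votes st))) PSol 0 [::] [::] [::])
      (bcast i (@Task S T (task S))) [::]
| H_Vote_elected_change T :
    rol st = Candidate -> term st = T -> T <> 1 ->
    quorum (undup (from :: votes st)) ->
    handle i st from (@Vote S T)
      (with_lead (with_votes st (undup (from :: votes st))) PAck 0 [::] [::] [::])
      (bcast i (@NewTerm S T)) [::]
| H_Task T t :
    (term st <= T)%N ->
    let st0 := if (term st < T)%N then adopt st T else st in
    let cr := reason i (ctx st0) t in
    handle i st from (@Task S T t) (with_ctx st0 cr.1)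
      [:: Msg i from (Solution T i cr.2)] [:: (i, cr.2)]
| H_Solution_wait T j s :
    rol st = Leader -> term st = T -> phase st = PSol ->
    j \notin map fst (coll st) ->
    ~~ quorum (map fst (rcons (coll st) (j, s))) ->
    handle i st from (Solution T j s)
      (with_lead st PSol (round st) (rcons (coll st) (j, s)) (acks st) (hist st)) [::] [::]
| H_Solution_done T j s :
    rol st = Leader -> term st = T -> phase st = PSol ->
    j \notin map fst (coll st) ->
    quorum (map fst (rcons (coll st) (j, s))) ->
    handle i st from (Solution T j s)
      (with_lead st PRefine 1 [::] (acks st) (hist st))
      (bcast i (RefmSet T 1 (map snd (rcons (coll st) (j, s))))) [::]
| H_RefmSet T r R :
    (term st < T)%N \/ (term st = T /\ (round st <= r)%N) ->
    let st0 := if (term st < T)%N then adopt st T else st in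
    let cr := reason i (ctx st0) (enc R) in
    handle i st from (RefmSet T r R) (with_refm st0 r R cr.1)
      [:: Msg i from (Refm T i r cr.2)] [::]
| H_Refm_wait T j r x :
    rol st = Leader -> term st = T -> phase st = PRefine -> round st = r ->
    j \notin map fst (coll st) ->
    ~~ quorum (map fst (rcons (coll st) (j, x))) ->
    handle i st from (Refm T j r x)
      (with_lead st PRefine r (rcons (coll st) (j, x)) (acks st) (hist st)) [::] [::]
| H_Refm_done T j r x :
    rol st = Leader -> term st = T -> phase st = PRefine -> round st = r ->
    j \notin map fst (coll st) ->
    quorum (map fst (rcons (coll st) (j, x))) ->
    let Rb := map snd (rcons (coll st) (j, x)) in
    handle i st from (Refm T j r x)
      (with_lead st PRefine r.+1 [::] (acks st) (rcons (hist st) (r, Rb)))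
      (bcast i (RefmSet T r.+1 Rb)) [::]
| H_NewTerm T :
    (term st < T)%N ->
    handle i st from (@NewTerm S T) (adopt st T)
      [:: Msg i from (NewTermAck T (term st) i (round st) (refmset st))] [::]
| H_Ack_wait T oT j r R :
    rol st = Leader -> term st = T -> phase st = PAck ->
    j \notin map (@a_id S) (acks st) ->
    ~~ quorum (map (@a_id S) (rcons (acks st) (Ack oT j r R))) ->
    handle i st from (NewTermAck T oT j r R)
      (with_lead st PAck (round st) (coll st) (rcons (acks st) (Ack oT j r R)) (hist st))
      [::] [::]
| H_Ack_none T oT j r R :
    rol st = Leader -> term st = T -> phase st = PAck ->
    j \notin map (@a_id S) (acks st) ->
    let A := rcons (acks st) (Ack oT j r R) in
    quorum (map (@a_id S) A) ->
    (forall a, List.In a A -> a_R a = None) ->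
    handle i st from (NewTermAck T oT j r R)
      (with_lead st PSol 0 [::] A (hist st)) (bcast i (@Task S T (task S))) [::]
| H_Ack_select T oT j r R a R0 :
    rol st = Leader -> term st = T -> phase st = PAck ->
    j \notin map (@a_id S) (acks st) ->
    let A := rcons (acks st) (Ack oT j r R) in
    quorum (map (@a_id S) A) ->
    List.In a A -> a_R a = Some R0 ->
    (forall b, List.In b A -> a_R b <> None ->
       lex_le (a_old b, a_round b) (a_old a, a_round a)) ->
    handle i st from (NewTermAck T oT j r R)
      (with_lead st PRefine 1 [::] A (hist st)) (bcast i (RefmSet T 1 R0)) [::].

Record gstate (S : Setup) := GState {
  loc : agent S -> lstate S;
  net : seq (msg S);
  gen : seq (agent S * Str S);       (* individual solutions R(t) generated so far *)
  outs : seq (Str S)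
}.

Definition upd S (f : agent S -> lstate S) (i : agent S) (x : lstate S) :=
  fun j => if j == i then x else f j.

Definition init_state (S : Setup) : gstate S :=
  @GState S (fun j : agent S => @LState S true 0 Worker 0 None (ctx0 j) [::] PNone [::] [::] [::] [::])
         [::] [::] [::].

Definition n_failed S (g : gstate S) : nat := #|[set j | ~~ alive (loc g j)]|.

Inductive step (S : Setup) : gstate S -> gstate S -> Prop :=
| S_timeout g i :
    alive (loc g i) ->
    let T := (term (loc g i)).+1 in
    step g (GState (upd (loc g) i (enter (loc g i) T Candidate [:: i]))
                   (net g ++ bcast i (@RequestVote S T)) (gen g) (outs g))
| S_crash g i :
    alive (loc g i) -> (n_failed g < (N S) %/ 2)%N ->
    step g (GState (upd (loc g) i (kill (loc g i))) (net g) (gen g) (outs g))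
| S_deliver g n1 m n2 st' out gs :
    net g = n1 ++ m :: n2 ->
    alive (loc g (dst m)) ->
    handle (dst m) (loc g (dst m)) (src m) (pay m) st' out gs ->
    step g (GState (upd (loc g) (dst m) st') (n1 ++ n2 ++ out) (gen g ++ gs) (outs g))
| S_drop g n1 m n2 :
    net g = n1 ++ m :: n2 ->
    step g (GState (loc g) (n1 ++ n2) (gen g) (outs g))
| S_output g i k Rk R' s :
    alive (loc g i) -> rol (loc g i) = Leader ->
    List.In (k, Rk) (hist (loc g i)) -> List.In s Rk ->
    List.In (k.+1, R') (hist (loc g i)) ->
    k \notin outr (loc g i) ->
    crit (term (loc g i)) k (hist (loc g i)) s ->
    step g (GState (upd (loc g) i (with_outr (loc g i) (k :: outr (loc g i))))
                   (net g) (gen g) (rcons (outs g) s)).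

Inductive reachable (S : Setup) : gstate S -> Prop :=
| R_init : reachable (init_state S)
| R_step g g' : reachable g -> step g g' -> reachable g'.

Definition reasoning_refinement (S : Setup) (Q : Str S -> Str S -> R) : Prop :=
  forall (i : agent S) (c : Ctx S) (L : seq (Str S)) (s : Str S),
    List.In s L -> Rle (Q (task S) s) (Q (task S) (reason i c (enc L)).2).

Definition majority_optimal (S : Setup) (Q : Str S -> Str S -> R) (g : gstate S)
    (sstar : Str S) : Prop :=
  exists (M : {set agent S}) (f : agent S -> Str S),
    (N S < 2 * #|M|)%N /\
    (forall j, j \in M -> List.In (j, f j) (gen g)) /\
    (exists2 j0, j0 \in M & sstar = f j0) /\
    (forall j, j \in M -> Rle (Q (task S) (f j)) (Q (task S) sstar)).

(* The proof is an invariant of the global state: every collected Solution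
   was really generated, every refinement set (in transit, stored by an agent,
   or reported to a new leader) contains a solution at least as good as some
   majority optimal one, and every refined solution, hence every member of a
   collected refinement set, is itself that good.  A quorum of Solutions
   establishes it, since its best member is majority optimal with the quorum
   as witness; the Reasoning Refinement assumption carries it through each
   refinement; and the leader only outputs members of collected refinement
   sets. *)

From Pilot Require Import Defs.
From mathcomp Require Import all_boot.
From Stdlib Require Import Reals.

Set Implicit Arguments.
Unset Strict Implicit.

Lemma In_rcons (T : Type) (s : seq T) x y :
  List.In y (rcons s x) <-> List.In y s \/ y = x.
Proof. by rewrite -cats1 List.in_app_iff /=; intuition. Qed.

Lemma exists_seq_argmax (T : eqType) (F : T -> R) (a : T) (l : seq T) :
  exists2 j0, j0 \in a :: l & forall j, j \in a :: l -> Rle (F j) (F j0).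
Proof.
elim: l a => [|b l IH] a.
  exists a => [|j]; rewrite mem_seq1 // => /eqP ->; exact: Rle_refl.
have [j0 j0_in j0_max] := IH b.
have [Fa_le|Fj0_lt] := Rle_or_lt (F a) (F j0).
  exists j0 => [|j]; first by rewrite in_cons j0_in orbT.
  by rewrite in_cons => /orP [/eqP ->|/j0_max].
exists a => [|j]; first by rewrite in_cons eqxx.
rewrite in_cons => /orP [/eqP ->|/j0_max Fj_le]; first exact: Rle_refl.
exact: Rle_trans Fj_le (Rlt_le _ _ Fj0_lt).
Qed.

Lemma card_set_mem_undup (T : finType) (s : seq T) :
  #|[set x in s]| = size (undup s).
Proof.
rewrite cardsE -(eq_card (mem_undup _)).
by move/card_uniqP: (undup_uniq s) => ->.
Qed.

Section RefinementValidity.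

Variable S : Setup.
Variable Q : Str S -> Str S -> R.

Let qual (x : Str S) := Q (task S) x.

(* [majority_optimal Q g] is, by conversion, [majority_optimal_in (gen g)];
   the invariant is stated for the log [gen g], which only grows. *)
Definition majority_optimal_in (gl : seq (agent S * Str S)) (sstar : Str S) :=
  exists (M : {set agent S}) (f : agent S -> Str S),
    (Defs.N S < 2 * #|M|)%N /\
    (forall j, j \in M -> List.In (j, f j) gl) /\
    (exists2 j0, j0 \in M & sstar = f j0) /\
    (forall j, j \in M -> Rle (qual (f j)) (qual sstar)).

Definition refinement_valid gl (x : Str S) :=
  exists sstar, majority_optimal_in gl sstar /\ Rle (qual sstar) (qual x).

Definition has_valid gl (Rs : seq (Str S)) :=
  exists2 y, List.In y Rs & refinement_valid gl y.

Definition opt_has_valid gl (oR : option (seq (Str S))) :=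
  if oR is Some Rs then has_valid gl Rs else True.

Definition coll_inv gl (ph : lphase) (c : seq (agent S * Str S)) :=
  match ph with
  | PSol => forall p, List.In p c -> List.In p gl
  | PRefine => forall p, List.In p c -> refinement_valid gl p.2
  | _ => True
  end.

Definition acks_inv gl (A : seq (ackrec S)) :=
  forall a, List.In a A -> opt_has_valid gl (a_R a).

Definition hist_inv gl (h : seq (nat * seq (Str S))) :=
  forall k Rk, List.In (k, Rk) h -> forall x, List.In x Rk -> refinement_valid gl x.

Definition local_inv gl (st : lstate S) :=
  [/\ opt_has_valid gl (refmset st), coll_inv gl (phase st) (coll st),
      acks_inv gl (acks st) & hist_inv gl (hist st)].

Definition msg_inv gl (p : payload S) :=
  match p with
  | Solution _ j s => List.In (j, s) gl
  | RefmSet _ _ Rs => has_valid gl Rs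
  | Refm _ _ _ x => refinement_valid gl x
  | NewTermAck _ _ _ _ oR => opt_has_valid gl oR
  | _ => True
  end.

Definition state_inv (g : gstate S) :=
  [/\ forall j, local_inv (gen g) (loc g j),
      forall m, List.In m (net g) -> msg_inv (gen g) (pay m) &
      forall s, List.In s (outs g) -> refinement_valid (gen g) s].

Section LogGrowth.

Variables gl gs : seq (agent S * Str S).

Lemma In_log_cat p : List.In p gl -> List.In p (gl ++ gs).
Proof. by move=> p_in; apply: List.in_or_app; left. Qed.

Lemma majority_optimal_in_cat x :
  majority_optimal_in gl x -> majority_optimal_in (gl ++ gs) x.
Proof.
move=> [M [f [M_maj [M_gen M_opt]]]].
by exists M, f; split; [|split] => // j /M_gen /In_log_cat.
Qed.

Lemma refinement_valid_cat x : refinement_valid gl x -> refinement_valid (gl ++ gs) x.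
Proof. by move=> [sstar [/majority_optimal_in_cat ? ?]]; exists sstar. Qed.

Lemma has_valid_cat Rs : has_valid gl Rs -> has_valid (gl ++ gs) Rs.
Proof. by move=> [y y_in /refinement_valid_cat]; exists y. Qed.

Lemma opt_has_valid_cat oR : opt_has_valid gl oR -> opt_has_valid (gl ++ gs) oR.
Proof. by case: oR => //= Rs /has_valid_cat. Qed.

Lemma msg_inv_cat p : msg_inv gl p -> msg_inv (gl ++ gs) p.
Proof.
case: p => //= [_ j s /In_log_cat //|_ _ Rs|_ _ _ x|_ _ _ _ oR].
- exact: has_valid_cat.
- exact: refinement_valid_cat.
- exact: opt_has_valid_cat.
Qed.

Lemma local_inv_cat st : local_inv gl st -> local_inv (gl ++ gs) st.
Proof.
case=> Hrefm Hcoll Hacks Hhist; split.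
- exact: opt_has_valid_cat.
- case: (phase st) Hcoll => //= Hc p /Hc; [exact: In_log_cat|exact: refinement_valid_cat].
- by move=> a /Hacks /opt_has_valid_cat.
- by move=> k Rk /Hhist H x /H /refinement_valid_cat.
Qed.

End LogGrowth.

Fixpoint assoc (j : agent S) (L : seq (agent S * Str S)) : Str S :=
  if L is p :: L' then (if p.1 == j then p.2 else assoc j L') else [::].

Lemma In_assoc j L : j \in map fst L -> List.In (j, assoc j L) L.
Proof.
elim: L => //= [[j' x] L IH]; rewrite in_cons /=.
by case: eqVneq => [->|_ /IH]; [left|right].
Qed.

Lemma quorum_has_valid gl (L : seq (agent S * Str S)) :
  List.incl L gl -> quorum (map fst L) -> has_valid gl (map snd L).
Proof.
move=> L_gen L_quorum.
case E: (map fst L) L_quorum => [//|a l] L_quorum.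
have [j0 j0_in j0_max] := exists_seq_argmax (fun j => qual (assoc j L)) a l.
rewrite -E in j0_in j0_max.
exists (assoc j0 L); first exact: List.in_map (In_assoc j0_in).
exists (assoc j0 L); split; last exact: Rle_refl.
exists [set j in map fst L], (fun j => assoc j L); split; [|split; [|split]].
- by rewrite card_set_mem_undup E.
- by move=> j; rewrite inE => /In_assoc /L_gen.
- by exists j0; rewrite ?inE.
- by move=> j; rewrite inE => /j0_max.
Qed.

Hypothesis refinement : reasoning_refinement Q.

Lemma reason_has_valid gl i c Rs :
  has_valid gl Rs -> refinement_valid gl (reason i c (enc Rs)).2.
Proof.
move=> [y y_in [sstar [sstar_opt sstar_le]]]; exists sstar; split=> //.
apply: Rle_trans sstar_le _; exact: refinement y_in.
Qed.

Lemma local_inv_enter gl st T r v :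
  opt_has_valid gl (refmset st) -> local_inv gl (enter st T r v).
Proof. by split. Qed.

Lemma local_inv_with_lead gl st ph rnd c A h :
  opt_has_valid gl (refmset st) -> coll_inv gl ph c -> acks_inv gl A ->
  hist_inv gl h -> local_inv gl (with_lead st ph rnd c A h).
Proof. by split. Qed.

Lemma acks_inv_rcons gl A oT j r oR :
  acks_inv gl A -> opt_has_valid gl oR -> acks_inv gl (rcons A (Ack oT j r oR)).
Proof. by move=> HA HR a /In_rcons [/HA|->]. Qed.

Lemma In_bcast i p m : List.In m (@bcast S i p) -> pay m = p.
Proof. by case/List.in_map_iff => j [<-]. Qed.

Lemma handle_local_inv gl i st from p st' out gs :
  local_inv gl st -> msg_inv gl p -> handle i st from p st' out gs ->
  local_inv gl st'.
Proof.
move=> [Hrefm Hcoll Hacks Hhist] Hp Hh; case: Hh Hp.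
- by move=> T _ _; apply: local_inv_enter.
- by [].
- by move=> T _ _ _ _ _; apply: local_inv_with_lead.
- by move=> T _ _ _ _ _; apply: local_inv_with_lead.
- by move=> T t _ st0 cr _; rewrite /st0; case: ifP => _; split.
- move=> T j s _ _ Hphase _ _ Hj; apply: local_inv_with_lead => //.
  by move: Hcoll; rewrite Hphase => Hc q /In_rcons [/Hc|->].
- by move=> T j s _ _ _ _ _ _; apply: local_inv_with_lead.
- move=> T r Rs _ st0 cr HRs.
  have [_ ? ? ?] : local_inv gl st0 by rewrite /st0; case: ifP => _ //; split.
  by split.
- move=> T j r x _ _ Hphase _ _ _ Hx; apply: local_inv_with_lead => //.
  by move: Hcoll; rewrite Hphase => Hc q /In_rcons [/Hc|->].
- move=> T j r x _ _ Hphase _ _ _ Rb Hx; apply: local_inv_with_lead => //.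
  move=> k Rk /In_rcons [/Hhist //|[_ ->]] y /List.in_map_iff [q [<-]].
  by move: Hcoll; rewrite Hphase => Hc /In_rcons [/Hc|->].
- by move=> T _ _; apply: local_inv_enter.
- move=> T oT j r oR _ _ _ _ _ HoR.
  by apply: local_inv_with_lead => //; apply: acks_inv_rcons.
- move=> T oT j r oR _ _ _ _ A _ _ HoR.
  by apply: local_inv_with_lead => //; apply: acks_inv_rcons.
- move=> T oT j r oR a R0 _ _ _ _ A _ _ _ _ HoR.
  by apply: local_inv_with_lead => //; apply: acks_inv_rcons.
Qed.

Lemma handle_out_inv gl i st from p st' out gs :
  local_inv gl st -> msg_inv gl p -> handle i st from p st' out gs ->
  forall m, List.In m out -> msg_inv (gl ++ gs) (pay m).
Proof.
move=> [Hrefm Hcoll Hacks _] Hp Hh m; case: Hh Hp; rewrite ?cats0.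
- by move=> T _ _ [<-|].
- by [].
- by move=> T _ _ _ _ _ /In_bcast ->.
- by move=> T _ _ _ _ _ /In_bcast ->.
- by move=> T t _ st0 cr _ [<-|] //=; apply: List.in_or_app; right; left.
- by [].
- move=> T j s _ _ Hphase _ Hq Hs /In_bcast -> /=; apply: quorum_has_valid Hq.
  by move: Hcoll; rewrite Hphase => Hc q /In_rcons [/Hc|->].
- by move=> T r Rs _ st0 cr HRs [<-|] //=; apply: reason_has_valid.
- by [].
- move=> T j r x _ _ _ _ _ _ Rb Hx /In_bcast -> /=; exists x => //.
  by apply: (List.in_map snd _ (j, x)); apply/In_rcons; right.
- by move=> T _ _ [<-|].
- by [].
- by move=> T oT j r oR _ _ _ _ A _ _ _ /In_bcast ->.
- move=> T oT j r oR a R0 _ _ _ _ A _ Ha HaR _ HoR /In_bcast -> /=.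
  by move: (acks_inv_rcons Hacks HoR Ha); rewrite HaR.
Qed.

Lemma upd_local_inv gl f i x :
  (forall j, local_inv gl (f j)) -> local_inv gl x ->
  forall j, local_inv gl (upd f i x j).
Proof. by move=> Hf Hx j; rewrite /upd; case: (j == i). Qed.

Lemma In_remove (T : Type) (n1 n2 : seq T) m y :
  List.In y (n1 ++ n2) -> List.In y (n1 ++ m :: n2).
Proof. by rewrite !List.in_app_iff /=; intuition. Qed.

Lemma state_inv_init : state_inv (init_state S).
Proof. by split=> // j; split. Qed.

Lemma state_inv_step g g' : step g g' -> state_inv g -> state_inv g'.
Proof.
case=> {g g'} [g i _ T|g i _ _|g n1 m n2 st' out gs Hsplit _ Hh|g n1 m n2 Hsplit|
               g i k Rk R' s _ _ Hk Hs _ _ _] [Hloc Hnet Houts].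
- split=> //=.
    by apply: upd_local_inv => //; apply: local_inv_enter; case: (Hloc i).
  by move=> y /List.in_app_iff [/Hnet|/In_bcast ->].
- by split=> //=; apply: upd_local_inv => //; exact: Hloc i.
- have m_in : List.In m (net g) by rewrite Hsplit; apply/List.in_app_iff; right; left.
  have st'_inv := handle_local_inv (Hloc (dst m)) (Hnet m m_in) Hh.
  split=> /=.
  + by apply: upd_local_inv => [j|]; apply: local_inv_cat.
  + move=> y; rewrite catA => /List.in_app_iff [y_in|]; last first.
      exact: handle_out_inv (Hloc (dst m)) (Hnet m m_in) Hh y.
    apply: msg_inv_cat (Hnet y _).
    by rewrite Hsplit; apply: In_remove.
  + by move=> s /Houts /refinement_valid_cat.
- split=> //= y y_in.
  by apply: Hnet; rewrite Hsplit; apply: In_remove.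
- split=> //=; first by apply: upd_local_inv => //; exact: Hloc i.
  have [_ _ _ Hhist] := Hloc i.
  by move=> y /In_rcons [/Houts|->] //; apply: Hhist Hk _ Hs.
Qed.

Lemma reachable_state_inv g : reachable g -> state_inv g.
Proof. by elim=> [|g1 g2 _ IH /state_inv_step]; [exact: state_inv_init|apply]. Qed.

End RefinementValidity.

Theorem lemma2 (S : Setup) (Q : Str S -> Str S -> R) :
  reasoning_refinement Q ->
  forall g : gstate S, reachable g ->
  forall s : Str S, List.In s (outs g) ->
  exists sstar : Str S, majority_optimal Q g sstar /\ Rle (Q (task S) sstar) (Q (task S) s).
Proof.
move=> refinement g reach_g s s_out.
have [_ _ outs_valid] := reachable_state_inv refinement reach_g.
exact: outs_valid.
Qed.
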